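(* Let $G$ be a graph (without multiple edges) on the node set $\{1,\dots,N\}$, where $N=n_1+n_2$ with $n_1,n_2\ge 2$ and $N\ge 4$, and assign to each edge $(i,j)\in G$ a fixed real weight $w_{ij}$ (not depending on the labels). Let the labels $(g_1,\dots,g_N)\in\{0,1\}^N$ be drawn uniformly at random among all binary vectors with exactly $n_1$ zeros and $n_2$ ones (the permutation null distribution), and set $R_1^w=\sum_{(i,j)\in G} w_{ij}\,I(g_i=g_j=0)$, $R_2^w=\sum_{(i,j)\in G} w_{ij}\,I(g_i=g_j=1)$. Let $\mu_k^w=\mathbf{E}(R_k^w)$ and let $\Sigma^w$ be the $2\times 2$ covariance matrix of $(R_1^w,R_2^w)$ under this distribution, assumed invertible, and define $$S_R=(R_1^w-\mu_1^w,\;R_2^w-\mu_2^w)\,(\Sigma^w)^{-1}\begin{pmatrix}R_1^w-\mu_1^w\\ R_2^w-\mu_2^w\end{pmatrix}.$$ Let $p=\frac{n_1-1}{N-2}$, $q=1-p$, and $$Z^R_{\mathrm{diff}}=\frac{(R_1^w-R_2^w)-\mathbf{E}(R_1^w-R_2^w)}{\sqrt{\mathbf{Var}(R_1^w-R_2^w)}},\qquad Z^R_w=\frac{(qR_1^w+pR_2^w)-\mathbf{E}(qR_1^w+pR_2^w)}{\sqrt{\mathbf{Var}(qR_1^w+pR_2^w)}},$$ all moments taken under the permutation null distribution. Then $$S_R=(Z^R_{\mathrm{diff}})^2+(Z^R_w)^2\quad\text{and}\quad \mathbf{Cov}(Z^R_{\mathrm{diff}},Z^R_w)=0 .$$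
   Context: This is the setting of graph-based two-sample tests: the $N$ nodes correspond to the pooled observations of two samples of sizes $n_1$ and $n_2$, $g_i=0$ meaning node $i$ belongs to the first sample and $g_i=1$ to the second. $R_1^w$ and $R_2^w$ are the weighted within-sample edge counts of the first and second samples. Edges are unordered pairs, each counted once in the sums. *)

From HB Require Import structures.
From mathcomp Require Import all_boot all_order all_algebra.
Unset Printing Implicit Defensive.
Import Order.TTheory GRing.Theory Num.Theory.
Local Open Scope ring_scope.

Section Defs.
Variables (R : rcfType) (n1 n2 : nat).
Local Notation N := (n1 + n2)%N.

(* labelling: g i = false means node i is in sample 1 (g_i = 0),
   g i = true means sample 2 (g_i = 1). *)
Definition labelling := {ffun 'I_N -> bool}.

Definition perm_support : {set labelling} :=
  [set g : labelling | #|[set i | ~~ g i]| == n1].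

Definition Eperm (X : labelling -> R) : R :=
  (\sum_(g in perm_support) X g) / #|perm_support|%:R.

Definition Covperm (X Y : labelling -> R) : R :=
  Eperm (fun g => (X g - Eperm X) * (Y g - Eperm Y)).

Definition Varperm (X : labelling -> R) : R := Covperm X X.

(* weighted within-sample edge counts; the graph is given by a relation e,
   each unordered edge {i,j} (i < j) counted once with weight w i j *)
Definition Rw (e : rel 'I_N) (w : 'I_N -> 'I_N -> R) (b : bool)
  (g : labelling) : R :=
  \sum_(i < N) \sum_(j < N | (i < j)%N && e i j)
     w i j * ((g i == b) && (g j == b))%:R.

Definition R1w e w := Rw e w false.
Definition R2w e w := Rw e w true.

Definition Rvec e w (k : 'I_2) : labelling -> R :=
  if k == ord0 then R1w e w else R2w e w.

Definition Sigmaw e w : 'M[R]_2 :=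
  \matrix_(k, l) Covperm (Rvec e w k) (Rvec e w l).

Definition S_R e w (g : labelling) : R :=
  let d := \row_(k < 2) (Rvec e w k g - Eperm (Rvec e w k)) in
  (d *m invmx (Sigmaw e w) *m d^T) ord0 ord0.

Definition pp : R := (n1 - 1)%:R / (N - 2)%:R.
Definition qq : R := 1 - pp.

Definition standardize (X : labelling -> R) (g : labelling) : R :=
  (X g - Eperm X) / Num.sqrt (Varperm X).

Definition Zdiff e w : labelling -> R :=
  standardize (fun g => R1w e w g - R2w e w g).

Definition Zw e w : labelling -> R :=
  standardize (fun g => qq * R1w e w g + pp * R2w e w g).

End Defs.

From HB Require Import structures.
From mathcomp Require Import all_boot all_order all_algebra.
From mathcomp Require Import zify ring lra.
Import Order.TTheory GRing.Theory Num.Theory.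

(* Write x_i for the indicator that node i lies in the second sample, W for the
   total weight, L = sum_(i,j) w_ij (x_i + x_j) and Q = sum_(i,j) w_ij x_i x_j.
   Then R_1 - R_2 = W - L and q R_1 + p R_2 = q (W - L) + Q.  For k distinct
   nodes, E(x_i1 ... x_ik) = 'C(N - k, n2 - k) / 'C(N, n2), and these moments
   give Cov(x_i x_j, x_m) = q (Cov(x_i, x_m) + Cov(x_j, x_m)) for i <> j; hence
   Cov(L, Q) = q Var(L) and the two statistics are uncorrelated.  As they are
   an invertible linear image of (R_1, R_2), the quadratic form S_R may be
   computed in these coordinates, where the covariance matrix is diagonal. *)

Lemma card_supersets (T : finType) (S : {set T}) k :
  #|[set A : {set T} | S \subset A & #|A| == k]| =
  if #|S| <= k then 'C(#|T| - #|S|, k - #|S|) else 0.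
Proof.
case: leqP => [leSk | ltkS]; last first.
  apply: eq_card0 => A; rewrite inE; apply/negP => /andP[SA /eqP cardA].
  by have := subset_leq_card SA; rewrite cardA leqNgt ltkS.
have -> : (#|T| - #|S| = #|~: S|)%N by rewrite [#|~: S|]cardsCs setCK.
have setUDK (B : {set T}) : B \subset ~: S -> (S :|: B) :\: S = B.
  by rewrite setDUl setDv set0U setDE => /setIidPl.
rewrite -cards_draws -[RHS](@card_in_imset _ _ (setU S)); last first.
  move=> B B'; rewrite !inE => /andP[BS _] /andP[B'S _] eqSB.
  by rewrite -(setUDK B) // eqSB setUDK.
apply: eq_card => A; rewrite inE; apply/andP/imsetP => [[SA /eqP cardA] | [B]].
  exists (A :\: S); last by rewrite -{1}(setID A S) (setIidPr SA).
  by rewrite inE subsetDr (cardsDS SA) cardA eqxx.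
rewrite inE => /andP[BS /eqP cardB] ->; split; first exact: subsetUl.
rewrite cardsU disjoint_setI0 ?disjoints_subset 1?subsetC // cards0 subn0.
by rewrite cardB subnKC.
Qed.

Definition nfix (n1 n2 k : nat) : nat :=
  if k <= n2 then 'C(n1 + n2 - k, n2 - k) else 0.

Section PermSupport.
Context {n1 n2 : nat}.
Local Notation N := (n1 + n2).
Local Notation support := (perm_support n1 n2).

Lemma perm_supportE (g : labelling n1 n2) :
  (g \in support) = (#|[set i | g i]| == n2).
Proof.
rewrite inE; have -> : [set i | ~~ g i] = ~: [set i | g i].
  by apply/setP => i; rewrite !inE.
by have := cardsC [set i | g i]; rewrite card_ord => card_split; apply/eqP/eqP; lia.
Qed.

Lemma card_perm_support_sets (P : pred {set 'I_N}) :
  #|[set g in support | P [set i | g i]]| = #|[set A | P A & #|A| == n2]|.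
Proof.
have trueset_inj : injective (fun g : labelling n1 n2 => [set i | g i]).
  by move=> g h /setP eq_gh; apply/ffunP => i; have := eq_gh i; rewrite !inE.
rewrite -(card_imset _ trueset_inj); apply: eq_card => A; rewrite inE.
apply/imsetP/andP => [[g] | [PA cardA]].
  by rewrite inE perm_supportE => /andP[cardg Pg] ->.
exists [ffun i => i \in A]; last by apply/setP => i; rewrite !inE ffunE.
have trueA : [set i | [ffun i => i \in A] i] = A by apply/setP => i; rewrite !inE ffunE.
by rewrite inE perm_supportE trueA PA cardA.
Qed.

Local Notation nfix := (nfix n1 n2).

Lemma card_perm_support_fixing (S : {set 'I_N}) :
  #|[set g in support | S \subset [set i | g i]]| = nfix #|S|.
Proof. by rewrite (card_perm_support_sets (fun A => S \subset A)) card_supersets card_ord. Qed.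

Lemma card_perm_support : #|support| = 'C(N, n2).
Proof.
have := card_perm_support_fixing set0; rewrite cards0 /nfix leq0n !subn0 => <-.
by apply: eq_card => g; rewrite inE sub0set andbT.
Qed.

Lemma nfix_rec k : nfix k.+1 * (N - k) = nfix k * (n2 - k).
Proof.
rewrite /nfix; case: ltnP => [lt_k_n2 | le_n2_k]; last first.
  by move: le_n2_k; rewrite -subn_eq0 => /eqP ->; rewrite muln0.
have := mul_bin_diag (N - k) (n2 - k.+1).
by rewrite ltnW // -subnS subnSK // mulnC => ->; rewrite mulnC.
Qed.

End PermSupport.

Local Open Scope ring_scope.

Section QuadraticForms.
Context {R : fieldType} {n : nat}.
Implicit Types (A S : 'M[R]_n) (d v : 'rV[R]_n).

Lemma invmxM A S : A \in unitmx -> S \in unitmx -> invmx (A *m S) = invmx S *m invmx A.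
Proof.
move=> uA uS; have uAS : A *m S \in unitmx by rewrite unitmx_mul uA.
have inv_AS : A *m S *m (invmx S *m invmx A) = 1%:M.
  by rewrite -mulmxA (mulmxA S) mulmxV // mul1mx mulmxV.
by rewrite -[RHS](mulKmx uAS) inv_AS mulmx1.
Qed.

Lemma quad_invmx_congr {A S} d : A \in unitmx -> S \in unitmx ->
  d *m invmx S *m d^T = (d *m A) *m invmx (A^T *m S *m A) *m (d *m A)^T.
Proof.
move=> uA uS; have uAT : A^T \in unitmx by rewrite unitmx_tr.
rewrite !invmxM ?unitmx_mul ?uAT // trmx_mul !mulmxA mulmxKV // -!mulmxA.
by rewrite mulKVmx.
Qed.

Lemma quad_invmx_diag v d : diag_mx v \in unitmx ->
  (d *m invmx (diag_mx v) *m d^T) 0 0 = \sum_k d 0 k ^+ 2 / v 0 k.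
Proof.
move=> uD; have /prodf_neq0 v_neq0 : \prod_k v 0 k != 0.
  by rewrite -unitfE -det_diag -unitmxE.
have -> : invmx (diag_mx v) = diag_mx (\row_k (v 0 k)^-1).
  have inv_v : diag_mx v *m diag_mx (\row_k (v 0 k)^-1) = 1%:M.
    rewrite mulmx_diag -diag_const_mx; congr diag_mx.
    by apply/rowP => k; rewrite !mxE mulfV ?v_neq0.
  by rewrite -[invmx _]mulmx1 -inv_v mulKmx.
rewrite mul_mx_diag !mxE; apply: eq_bigr => k _; rewrite !mxE; ring.
Qed.

End QuadraticForms.

Definition edge_sum {V : nmodType} {n : nat} (e : rel 'I_n) (F : 'I_n -> 'I_n -> V) : V :=
  \sum_(i < n) \sum_(j < n | (i < j)%N && e i j) F i j.

Lemma eq_edge_sum (V : nmodType) n (e : rel 'I_n) (F G : 'I_n -> 'I_n -> V) :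
  (forall i j : 'I_n, (i < j)%N -> F i j = G i j) -> edge_sum e F = edge_sum e G.
Proof.
by move=> eqFG; apply: eq_bigr => i _; apply: eq_bigr => j /andP[ij _]; apply: eqFG.
Qed.

Lemma edge_sumB (V : zmodType) n (e : rel 'I_n) (F G : 'I_n -> 'I_n -> V) :
  edge_sum e (fun i j => F i j - G i j) = edge_sum e F - edge_sum e G.
Proof. by rewrite /edge_sum -sumrB; apply: eq_bigr => i _; rewrite -sumrB. Qed.

Lemma edge_sumZ (R : pzRingType) n (e : rel 'I_n) a (F : 'I_n -> 'I_n -> R) :
  edge_sum e (fun i j => a * F i j) = a * edge_sum e F.
Proof. by rewrite /edge_sum mulr_sumr; apply: eq_bigr => i _; rewrite mulr_sumr. Qed.

Section PermMoments.
Context {R : rcfType} {n1 n2 : nat}.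
Local Notation labelling := (labelling n1 n2).
Local Notation support := (perm_support n1 n2).
Local Notation E := (Eperm R n1 n2).
Local Notation Cov := (Covperm R n1 n2).
Local Notation Var := (Varperm R n1 n2).
Implicit Types (X Y : labelling -> R) (g : labelling).

Lemma card_perm_support_neq0 : #|support|%:R != 0 :> R.
Proof. by rewrite card_perm_support pnatr_eq0 -lt0n bin_gt0 leq_addl. Qed.

Lemma eq_Eperm {X Y} : {in support, X =1 Y} -> E X = E Y.
Proof. by move=> eqXY; rewrite /Eperm (eq_bigr _ eqXY). Qed.

Lemma EpermD X Y : E (fun g => X g + Y g) = E X + E Y.
Proof. by rewrite /Eperm big_split mulrDl. Qed.

Lemma EpermZ a X : E (fun g => a * X g) = a * E X.
Proof. by rewrite /Eperm -mulr_sumr mulrA. Qed.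

Lemma Eperm_cst a : E (fun=> a) = a.
Proof. by rewrite /Eperm sumr_const -[a *+ _]mulr_natr mulfK ?card_perm_support_neq0. Qed.

Lemma Eperm_sum (I : Type) (r : seq I) (P : pred I) (F : I -> labelling -> R) :
  E (fun g => \sum_(k <- r | P k) F k g) = \sum_(k <- r | P k) E (F k).
Proof. by rewrite /Eperm exchange_big /= mulr_suml. Qed.

Lemma CovpermE X Y : Cov X Y = E (fun g => X g * Y g) - E X * E Y.
Proof.
rewrite /Covperm (@eq_Eperm _
  (fun g => X g * Y g + (- E Y) * X g + ((- E X) * Y g + E X * E Y))); last first.
  by move=> g _ /=; ring.
by rewrite !EpermD Eperm_cst !EpermZ; ring.
Qed.

Lemma CovpermC X Y : Cov X Y = Cov Y X.
Proof.
by rewrite !CovpermE mulrC; congr (_ - _); apply: eq_Eperm => g _; rewrite mulrC.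
Qed.

Lemma eq_Covperm {X X' Y Y'} :
  {in support, X =1 X'} -> {in support, Y =1 Y'} -> Cov X Y = Cov X' Y'.
Proof.
move=> eqX eqY; rewrite !CovpermE (eq_Eperm eqX) (eq_Eperm eqY).
by congr (_ - _); apply: eq_Eperm => g gS; rewrite eqX ?eqY.
Qed.

Lemma Covperm_suml (I : Type) (r : seq I) (P : pred I) (F : I -> labelling -> R) Y :
  Cov (fun g => \sum_(k <- r | P k) F k g) Y = \sum_(k <- r | P k) Cov (F k) Y.
Proof.
have distrY g : (\sum_(k <- r | P k) F k g) * Y g = \sum_(k <- r | P k) F k g * Y g.
  exact: mulr_suml.
rewrite CovpermE (eq_Eperm (fun g _ => distrY g)) !Eperm_sum mulr_suml -sumrB.
by apply: eq_bigr => k _; rewrite CovpermE.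
Qed.

Lemma CovpermDl X X' Y : Cov (fun g => X g + X' g) Y = Cov X Y + Cov X' Y.
Proof.
rewrite !CovpermE EpermD (@eq_Eperm _ (fun g => X g * Y g + X' g * Y g)).
  by rewrite EpermD; ring.
by move=> g _; rewrite mulrDl.
Qed.

Lemma CovpermZl a X Y : Cov (fun g => a * X g) Y = a * Cov X Y.
Proof.
rewrite !CovpermE EpermZ (@eq_Eperm _ (fun g => a * (X g * Y g))).
  by rewrite EpermZ; ring.
by move=> g _; rewrite mulrA.
Qed.

Lemma Covperm_cstl a Y : Cov (fun=> a) Y = 0.
Proof. by rewrite CovpermE EpermZ Eperm_cst subrr. Qed.

Lemma Covperm_affinel a b X Y : Cov (fun g => a + b * X g) Y = b * Cov X Y.
Proof. by rewrite CovpermDl Covperm_cstl CovpermZl add0r. Qed.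

Lemma Varperm_ge0 X : 0 <= Var X.
Proof.
apply: divr_ge0 (ler0n _ _).
by apply: sumr_ge0 => g _; rewrite -expr2 sqr_ge0.
Qed.

Lemma Covperm_standardize X Y :
  Cov (standardize R n1 n2 X) (standardize R n1 n2 Y) =
  Cov X Y / (Num.sqrt (Var X) * Num.sqrt (Var Y)).
Proof.
have affine Z : {in support, standardize R n1 n2 Z =1
    fun g => - E Z / Num.sqrt (Var Z) + (Num.sqrt (Var Z))^-1 * Z g}.
  by move=> g _; rewrite /standardize; ring.
rewrite (eq_Covperm (affine X) (affine Y)) Covperm_affinel CovpermC Covperm_affinel.
by rewrite CovpermC invfM; ring.
Qed.

End PermMoments.

Definition in2 (R : rcfType) (n1 n2 : nat) (i : 'I_(n1 + n2)) (g : labelling n1 n2) : R :=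
  (g i)%:R.

Definition mom (R : rcfType) (n1 n2 k : nat) : R :=
  (nfix n1 n2 k)%:R / 'C(n1 + n2, n2)%:R.

Section Indicators.
Context {R : rcfType} {n1 n2 : nat}.
Local Notation N := (n1 + n2)%N.
Local Notation support := (perm_support n1 n2).
Local Notation E := (Eperm R n1 n2).
Local Notation in2 := (in2 R n1 n2).
Local Notation mom := (mom R n1 n2).

Lemma prod_in2 (S : {set 'I_N}) g :
  \prod_(x in S) in2 x g = (S \subset [set i | g i])%:R.
Proof.
case: (boolP (S \subset _)) => [/subsetP Sg | /subsetPn[x xS]].
  by apply: big1 => x /Sg; rewrite inE /in2 => ->.
by rewrite inE (bigD1 x) //= /in2 => /negbTE ->; rewrite mul0r.
Qed.

Lemma Eperm_prod_in2 (S : {set 'I_N}) :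
  E (fun g => \prod_(x in S) in2 x g) = mom #|S|.
Proof.
rewrite /Eperm /mom /= -card_perm_support -card_perm_support_fixing; congr (_ / _).
rewrite -sum1_card natr_sum big_mkcond [RHS]big_mkcond /=; apply: eq_bigr => g _.
by rewrite prod_in2 [in RHS]inE; case: (g \in support); case: (S \subset _).
Qed.

Lemma mom0 : mom 0 = 1.
Proof.
rewrite /mom /= /nfix leq0n !subn0 divff // pnatr_eq0 -lt0n bin_gt0 leq_addl //.
Qed.

Lemma mom_rec k : (k < N)%N -> mom k.+1 = mom k * (n2 - k)%:R / (N - k)%:R.
Proof.
move=> lt_k_N; have := congr1 (fun m => m%:R : R) (@nfix_rec n1 n2 k).
have Nk_neq0 : (N - k)%:R != 0 :> R by rewrite pnatr_eq0 subn_eq0 -ltnNge.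
by rewrite !natrM /mom /= [_ / _ * _]mulrAC => <-; rewrite mulrAC mulfK.
Qed.

Lemma Eperm_in2 i : E (in2 i) = mom 1.
Proof. by rewrite -(cards1 i) -Eperm_prod_in2; apply: eq_Eperm => g _; rewrite big_set1. Qed.

Lemma Eperm_in2_pair i j : i != j -> E (fun g => in2 i g * in2 j g) = mom 2.
Proof.
move=> ij; have := Eperm_prod_in2 [set i; j]; rewrite cards2 ij => <-.
by apply: eq_Eperm => g _; rewrite big_setU1 ?big_set1 ?inE.
Qed.

Lemma Eperm_in2_triple i j m : i != j -> i != m -> j != m ->
  E (fun g => in2 i g * in2 j g * in2 m g) = mom 3.
Proof.
move=> ij im jm; have i_out : i \notin [set j; m] by rewrite !inE negb_or ij im.
have := Eperm_prod_in2 [set i; j; m].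
rewrite -setUA cardsU1 i_out cards2 jm => <-; apply: eq_Eperm => g _.
by rewrite (big_setU1 _ i_out) big_setU1 ?inE // big_set1 /= mulrA.
Qed.

End Indicators.

Section PairCovariance.
Context {R : rcfType} {n1 n2 : nat}.
Local Notation Cov := (Covperm R n1 n2).
Local Notation in2 := (in2 R n1 n2).
Local Notation mom := (mom R n1 n2).
Local Notation q := (qq R n1 n2).
Hypotheses (n1_gt0 : (0 < n1)%N) (n2_gt1 : (1 < n2)%N).

Lemma mom_qq_identities :
  mom 2 - mom 2 * mom 1 = q * ((mom 1 - mom 1 * mom 1) + (mom 2 - mom 1 * mom 1)) /\
  mom 3 - mom 2 * mom 1 = q * ((mom 2 - mom 1 * mom 1) + (mom 2 - mom 1 * mom 1)).
Proof.
rewrite !mom_rec ?mom0; try lia.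
rewrite /qq /pp !subn0 !natrB ?natrD; try lia.
have n1_ge1 : 1 <= n1%:R :> R by rewrite (ler_nat R 1).
have n2_ge2 : 2 <= n2%:R :> R by rewrite (ler_nat R 2).
have N_neq0 : n1%:R + n2%:R != 0 :> R by rewrite gt_eqF //; lra.
have N1_neq0 : n1%:R + n2%:R - 1 != 0 :> R by rewrite gt_eqF //; lra.
have N2_neq0 : n1%:R + n2%:R - 2 != 0 :> R by rewrite gt_eqF //; lra.
by split; field; rewrite N_neq0 N1_neq0 N2_neq0.
Qed.

Lemma Covperm_in2_pair i j m : i != j ->
  Cov (fun g => in2 i g * in2 j g) (in2 m) = q * (Cov (in2 i) (in2 m) + Cov (in2 j) (in2 m)).
Proof.
have [id_mi id_m_out] := mom_qq_identities.
wlog mj : i j / m != j => [wlog ij | ij].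
  have [m_j | mj] := eqVneq m j; last exact: wlog.
  have mi : m != i by rewrite m_j eq_sym.
  rewrite addrC -(wlog j i mi) 1?eq_sym //.
  by apply: eq_Covperm => // g _; exact: mulrC.
have ji : j != i by rewrite eq_sym.
have [-> | mi] := eqVneq m i.
  have in2K g : in2 i g * in2 i g = in2 i g.
    by rewrite /in2; case: (g i); rewrite ?mul1r ?mul0r.
  have in2_pairK g : in2 i g * in2 j g * in2 i g = in2 i g * in2 j g.
    by rewrite mulrAC in2K.
  rewrite !CovpermE (eq_Eperm (fun g _ => in2K g)) (eq_Eperm (fun g _ => in2_pairK g)).
  by rewrite !Eperm_in2 (Eperm_in2_pair _ _ ij) (Eperm_in2_pair _ _ ji); exact: id_mi.
have im : i != m by rewrite eq_sym.
have jm : j != m by rewrite eq_sym.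
rewrite !CovpermE (Eperm_in2_triple _ _ _ ij im jm) !Eperm_in2 (Eperm_in2_pair _ _ ij).
by rewrite (Eperm_in2_pair _ _ im) (Eperm_in2_pair _ _ jm); exact: id_m_out.
Qed.

End PairCovariance.

Definition edge_lin (R : rcfType) n1 n2 (e : rel 'I_(n1 + n2)) w (g : labelling n1 n2) : R :=
  edge_sum e (fun i j => w i j * (in2 R n1 n2 i g + in2 R n1 n2 j g)).

Definition edge_quad (R : rcfType) n1 n2 (e : rel 'I_(n1 + n2)) w (g : labelling n1 n2) : R :=
  edge_sum e (fun i j => w i j * (in2 R n1 n2 i g * in2 R n1 n2 j g)).

Section EdgeCounts.
Context {R : rcfType} {n1 n2 : nat}.
Local Notation N := (n1 + n2)%N.
Local Notation labelling := (labelling n1 n2).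
Local Notation Cov := (Covperm R n1 n2).
Local Notation in2 := (in2 R n1 n2).
Local Notation p := (pp R n1 n2).
Local Notation q := (qq R n1 n2).
Variables (e : rel 'I_N) (w : 'I_N -> 'I_N -> R).
Local Notation R1 := (R1w R n1 n2 e w).
Local Notation R2 := (R2w R n1 n2 e w).
Local Notation L := (edge_lin R n1 n2 e w).
Local Notation Q := (edge_quad R n1 n2 e w).

Lemma Rw_edge_sum b g :
  Rw R n1 n2 e w b g = edge_sum e (fun i j => w i j * ((g i == b) && (g j == b))%:R).
Proof. by []. Qed.

Lemma R1w_sub_R2w g : R1 g - R2 g = edge_sum e w - L g.
Proof.
rewrite /R1w /R2w /edge_lin !Rw_edge_sum -!edge_sumB.
by apply: eq_edge_sum => i j _; rewrite /in2; case: (g i); case: (g j); rewrite /=; ring.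
Qed.

Lemma R1w_wsum_R2w g : q * R1 g + p * R2 g = q * (edge_sum e w - L g) + Q g.
Proof.
have R2_quad : R2 g = Q g.
  by apply: eq_edge_sum => i j _; rewrite /in2; case: (g i); case: (g j); rewrite /=; ring.
by rewrite -R1w_sub_R2w -R2_quad /qq; ring.
Qed.

Lemma Covperm_edge_suml (F : 'I_N -> 'I_N -> labelling -> R) Y :
  Cov (fun g => edge_sum e (fun i j => F i j g)) Y = edge_sum e (fun i j => Cov (F i j) Y).
Proof. by rewrite Covperm_suml; apply: eq_bigr => i _; rewrite Covperm_suml. Qed.

Lemma Covperm_edge_linl Y :
  Cov L Y = edge_sum e (fun i j => w i j * (Cov (in2 i) Y + Cov (in2 j) Y)).
Proof.
rewrite Covperm_edge_suml; apply: eq_edge_sum => i j _.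
by rewrite CovpermZl CovpermDl.
Qed.

Hypotheses (n1_gt0 : (0 < n1)%N) (n2_gt1 : (1 < n2)%N).

Lemma Covperm_in2_edge_quad m : Cov (in2 m) Q = q * Cov (in2 m) L.
Proof.
rewrite CovpermC Covperm_edge_suml CovpermC Covperm_edge_linl -edge_sumZ.
apply: eq_edge_sum => i j lt_ij; have neq_ij : i != j by rewrite neq_ltn lt_ij.
by rewrite CovpermZl Covperm_in2_pair // mulrCA.
Qed.

Lemma Covperm_edge_lin_quad : Cov L Q = q * Cov L L.
Proof.
rewrite Covperm_edge_linl [in RHS]Covperm_edge_linl -edge_sumZ.
by apply: eq_edge_sum => i j _; rewrite !Covperm_in2_edge_quad; ring.
Qed.

Lemma Covperm_R1w_sub_wsum : Cov (fun g => R1 g - R2 g) (fun g => q * R1 g + p * R2 g) = 0.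
Proof.
rewrite (@eq_Covperm _ _ _ _ (fun g => edge_sum e w + (-1) * L g) _
  (fun g => q * edge_sum e w + 1 * ((- q) * L g + Q g))); first last.
- by move=> g _; rewrite R1w_wsum_R2w; ring.
- by move=> g _; rewrite R1w_sub_R2w; ring.
rewrite Covperm_affinel CovpermC Covperm_affinel CovpermDl CovpermZl.
by rewrite (CovpermC Q) Covperm_edge_lin_quad; ring.
Qed.

End EdgeCounts.

Definition covmx (R : rcfType) n1 n2 {n} (X : 'I_n -> labelling n1 n2 -> R) : 'M[R]_n :=
  \matrix_(k, l) Covperm R n1 n2 (X k) (X l).

Definition centered (R : rcfType) n1 n2 {n} (X : 'I_n -> labelling n1 n2 -> R)
    (g : labelling n1 n2) : 'rV[R]_n :=
  \row_k (X k g - Eperm R n1 n2 (X k)).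

Section CovarianceMatrix.
Context {R : rcfType} {n1 n2 : nat}.
Local Notation labelling := (labelling n1 n2).
Local Notation Cov := (Covperm R n1 n2).
Local Notation covmx := (covmx R n1 n2).
Local Notation centered := (centered R n1 n2).
Context {n m : nat} {X : 'I_n -> labelling -> R} {Y : 'I_m -> labelling -> R}.

Lemma centered_lincomb {A : 'M[R]_(n, m)} g :
  (forall l g, Y l g = \sum_k A k l * X k g) -> centered Y g = centered X g *m A.
Proof.
move=> YE; apply/rowP => l; rewrite !mxE YE (eq_Eperm (fun g _ => YE l g)) Eperm_sum.
by rewrite -sumrB; apply: eq_bigr => k _; rewrite EpermZ !mxE; ring.
Qed.

Lemma covmx_lincomb {A : 'M[R]_(n, m)} :
  (forall l g, Y l g = \sum_k A k l * X k g) -> covmx Y = A^T *m covmx X *m A.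
Proof.
move=> YE; apply/matrixP => l l'; rewrite !mxE.
rewrite (eq_Covperm (fun g _ => YE l g) (fun g _ => YE l' g)) Covperm_suml.
under eq_bigr => k _ do rewrite CovpermZl CovpermC Covperm_suml.
under [RHS]eq_bigr => j _ do rewrite mxE mulr_suml.
rewrite [RHS]exchange_big /=; apply: eq_bigr => k _; rewrite mulr_sumr.
by apply: eq_bigr => j _; rewrite CovpermZl CovpermC !mxE; ring.
Qed.

Lemma covmx_uncorrelated :
  (forall k l, k != l -> Cov (X k) (X l) = 0) ->
  covmx X = diag_mx (\row_k Varperm R n1 n2 (X k)).
Proof.
move=> uncorr; apply/matrixP => k l; rewrite !mxE.
by have [<- | /uncorr->] := eqVneq k l; rewrite ?mulr1n ?mulr0n.
Qed.

End CovarianceMatrix.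

Definition diff_wsum (R : rcfType) n1 n2 e w (l : 'I_2) : labelling n1 n2 -> R :=
  if l == ord0 then fun g => R1w R n1 n2 e w g - R2w R n1 n2 e w g
  else fun g => qq R n1 n2 * R1w R n1 n2 e w g + pp R n1 n2 * R2w R n1 n2 e w g.

Definition diff_wsum_mx (R : rcfType) n1 n2 : 'M[R]_2 :=
  \matrix_(k, l) if l == ord0 then (if k == ord0 then 1 else -1)
                 else (if k == ord0 then qq R n1 n2 else pp R n1 n2).

Section DiffWsum.
Context {R : rcfType} {n1 n2 : nat}.
Variables (e : rel 'I_(n1 + n2)) (w : 'I_(n1 + n2) -> 'I_(n1 + n2) -> R).
Local Notation Y := (diff_wsum R n1 n2 e w).
Local Notation A := (diff_wsum_mx R n1 n2).

Lemma diff_wsum_lincomb l g : Y l g = \sum_k A k l * Rvec R n1 n2 e w k g.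
Proof.
rewrite !big_ord_recl big_ord0 !mxE /=.
by case: l => -[|[|//]] ?; rewrite /diff_wsum /Rvec /=; ring.
Qed.

Lemma diff_wsum_mx_unit : A \in unitmx.
Proof.
pose B : 'M[R]_2 := \matrix_(k, l)
  if l == ord0 then (if k == ord0 then pp R n1 n2 else 1)
  else (if k == ord0 then - qq R n1 n2 else 1).
suff /mulmx1_unit[] : A *m B = 1%:M by [].
apply/matrixP => k l; rewrite !mxE !big_ord_recl big_ord0 !mxE /=.
by case: k => -[|[|//]] ?; case: l => -[|[|//]] ? /=; rewrite /qq; ring.
Qed.

Lemma Covperm_diff_wsum : (0 < n1)%N -> (1 < n2)%N ->
  forall k l, k != l -> Covperm R n1 n2 (Y k) (Y l) = 0.
Proof.
move=> n1_gt0 n2_gt1; have cov01 := Covperm_R1w_sub_wsum e w n1_gt0 n2_gt1.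
by case=> -[|[|//]] ?; case=> -[|[|//]] ? //= _; rewrite /diff_wsum /= // CovpermC.
Qed.

End DiffWsum.

Theorem theorem1 (R : rcfType) (n1 n2 : nat)
  (e : rel 'I_(n1 + n2)) (w : 'I_(n1 + n2) -> 'I_(n1 + n2) -> R) :
  (2 <= n1)%N -> (2 <= n2)%N -> (4 <= n1 + n2)%N ->
  irreflexive e -> symmetric e ->
  Sigmaw R n1 n2 e w \in unitmx ->
  (forall g, g \in perm_support n1 n2 ->
     S_R R n1 n2 e w g
       = Zdiff R n1 n2 e w g ^+ 2 + Zw R n1 n2 e w g ^+ 2) /\
  Covperm R n1 n2 (Zdiff R n1 n2 e w) (Zw R n1 n2 e w) = 0.
Proof.
move=> n1_ge2 n2_ge2 _ _ _ Sigma_unit; have n1_gt0 : (0 < n1)%N by apply: ltnW.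
have uncorr := Covperm_diff_wsum e w n1_gt0 n2_ge2.
have covY := covmx_lincomb (diff_wsum_lincomb e w).
have covY_unit : covmx R n1 n2 (diff_wsum R n1 n2 e w) \in unitmx.
  by rewrite covY !unitmx_mul unitmx_tr diff_wsum_mx_unit Sigma_unit.
split=> [g _ | ]; last by rewrite Covperm_standardize Covperm_R1w_sub_wsum ?mul0r.
rewrite /S_R -/(covmx R n1 n2 _) -/(centered R n1 n2 _ g).
rewrite (quad_invmx_congr _ (@diff_wsum_mx_unit R n1 n2) Sigma_unit).
rewrite -(centered_lincomb _ (diff_wsum_lincomb e w)) -covY.
rewrite covmx_uncorrelated // in covY_unit *; rewrite quad_invmx_diag //.
rewrite !big_ord_recl big_ord0 addr0 !mxE /Zdiff /Zw /standardize !expr_div_n.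
by rewrite !sqr_sqrtr ?Varperm_ge0.
Qed.
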